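(* Let $N\ge 2$, $P=2$, $L=N+1$. For $\mathbf{b}=[b_1,\dots,b_N]^T\in\{\pm1\}^N$ let $\mathbf{B}$ be the $L\times 2$ matrix whose first column is $[b_1,\dots,b_N,0]^T$ and whose second column is $[0,b_1,\dots,b_N]^T$, so that $$\mathbf{B}^T\mathbf{B}=\begin{bmatrix}N & \sum_{i=1}^{N-1}b_ib_{i+1}\\ \sum_{i=1}^{N-1}b_ib_{i+1} & N\end{bmatrix}.$$ For a $2\times2$ matrix $\mathbf{G}$ and a prefix $\mathbf{b}_{(\ell)}=[b_1,\dots,b_\ell]\in\{\pm1\}^\ell$ ($1\le\ell\le N$), let $\mathcal{A}(\mathbf{b}_{(\ell)}\mid\mathbf{G})$ denote the set of all $\mathbf{b}'\in\{\pm1\}^N$ whose first $\ell$ entries equal $b_1,\dots,b_\ell$ and whose associated matrix $\mathbf{B}'$ satisfies $\mathbf{B}'^T\mathbf{B}'=\mathbf{G}$. Let $m_\ell=(b_1b_2+\cdots+b_{\ell-1}b_\ell)\cdot\mathbf{1}\{\ell>1\}$ (so $m_1=0$), where $\mathbf{1}\{\cdot\}$ is the indicator function. (i) If $N$ is odd and $\mathbf{G}=N\mathbf{I}_2$, then for $1\le\ell\le N$, $$|\mathcal{A}(\mathbf{b}_{(\ell)}\mid\mathbf{G})|=\binom{N-\ell}{(N-\ell-m_\ell)/2}\,\mathbf{1}\{|m_\ell|\le N-\ell\}.$$ (ii) If $N$ is even, and $\mathbf{G}_1=\begin{bmatrix}N&-1\\-1&N\end{bmatrix}$, $\mathbf{G}_2=\begin{bmatrix}N&1\\1&N\end{bmatrix}$,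 then for $\theta\in\{1,2\}$ and $1\le\ell\le N$, $$|\mathcal{A}(\mathbf{b}_{(\ell)}\mid\mathbf{G}_\theta)|=\binom{N-\ell}{(N-\ell+(-1)^\theta-m_\ell)/2}\,\mathbf{1}\{|(-1)^\theta-m_\ell|\le N-\ell\}.$$ Here $\binom{0}{0}=1$, and the right-hand sides are understood to be $0$ whenever the indicator is $0$.
   Context: $\mathbf{I}_2$ is the $2\times 2$ identity matrix. This is the setting of binary $\pm1$ codewords transmitted over a channel of memory order one, where $\mathbf{B}$ is the convolution (Toeplitz) matrix of the codeword. *)

From HB Require Import structures.
From mathcomp Require Import all_boot all_order all_algebra.
Set Implicit Arguments. Unset Strict Implicit. Unset Printing Implicit Defensive.
Import Order.TTheory GRing.Theory Num.Theory.
Local Open Scope ring_scope.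

(* A codeword b in {+1,-1}^N is encoded as b : {ffun 'I_N -> bool},
   with true |-> +1 and false |-> -1 (a bijection). *)
Definition sgnb (x : bool) : int := if x then 1 else -1.

(* bv b k = b_{k+1} (0-based index k), and 0 outside 0 <= k < N. *)
Definition bv (N : nat) (b : {ffun 'I_N -> bool}) (k : nat) : int :=
  match ltnP k N with
  | LtnNotGeq Hk => sgnb (b (Ordinal Hk))
  | _ => 0
  end.

Definition Bmat (N : nat) (b : {ffun 'I_N -> bool}) : 'M[int]_(N.+1, 2) :=
  \matrix_(i < N.+1, j < 2)
    (if j == 0 :> nat then bv b i else if i == 0 :> nat then 0 else bv b i.-1).

Definition Aset (N : nat) (b : {ffun 'I_N -> bool}) (l : nat) (G : 'M[int]_2)
  : {set {ffun 'I_N -> bool}} :=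
  [set b' : {ffun 'I_N -> bool} |
     [forall i : 'I_N, (i < l)%N ==> (b' i == b i)] &&
     ((Bmat b')^T *m Bmat b' == G)].

Definition mell (N : nat) (b : {ffun 'I_N -> bool}) (l : nat) : int :=
  \sum_(0 <= k < l.-1) bv b k * bv b k.+1.

Definition Gtheta (N theta : nat) : 'M[int]_2 :=
  \matrix_(i < 2, j < 2) (if i == j then (N%:Z) else (-1) ^+ theta).

Definition GNI (N : nat) : 'M[int]_2 := (N%:Z)%:M.

From HB Require Import structures.
From mathcomp Require Import all_boot all_order all_algebra.
From mathcomp Require Import zify.
Import Order.TTheory GRing.Theory Num.Theory.
Local Open Scope ring_scope.
Set Implicit Arguments. Unset Strict Implicit.

(* The Gram matrix of [B] is [[N, m_N], [m_N, N]], so only the autocorrelation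
   m_N is constrained.  A product b_(i-1) b_i is +1 exactly when position i is a
   tie (b_(i-1) = b_i), hence m_N = m_l + 2 |T| - (N - l) where T is the set of
   ties after the prefix.  A codeword extending a given prefix is determined by
   its set T, and every subset of the N - l tail positions occurs, so the count
   is the number of subsets of size (N - l + t - m_l) / 2 of an (N - l)-set.
   This size is an integer since m_l = l - 1 and t = N - 1 (mod 2). *)

Lemma sgnbM x y : sgnb x * sgnb y = sgnb (x == y).
Proof. by case: x; case: y. Qed.

Lemma sum_sgnb (P : pred nat) m n :
  \sum_(m <= i < n) sgnb (P i) = 2 * (\sum_(m <= i < n) P i)%:R - (n - m)%:R.
Proof.
rewrite (eq_bigr (fun i => 2 * (P i : nat)%:R - 1)); last by move=> i _; case: (P i).
by rewrite sumrB -mulr_sumr natr_sum sumr_const_nat.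
Qed.

Lemma card_subsets_of_size (T : finType) (B : {set T}) (k : int) :
  #|[set A : {set T} | (A \subset B) && (#|A|%:Z == k)]| =
  if 0 <= k <= #|B|%:Z then 'C(#|B|, absz k) else 0%N.
Proof.
case: ifPn => [/andP [k_ge0 _] | k_out].
  rewrite -cards_draws; apply: eq_card => A; rewrite !inE.
  by rewrite -eqz_nat gez0_abs.
apply: eq_card0 => A; rewrite inE; apply: contraNF k_out => /andP [sAB /eqP <-].
by rewrite lez_nat subset_leq_card.
Qed.

Definition toeplitz2 (d t : int) : 'M[int]_2 :=
  \matrix_(i < 2, j < 2) (if i == j then d else t).

Lemma toeplitz2_inj d : injective (toeplitz2 d).
Proof. by move=> t t' /matrixP /(_ 0 1); rewrite !mxE. Qed.

Lemma GNI_toeplitz2 N : GNI N = toeplitz2 N 0.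
Proof. by apply/matrixP => i j; rewrite !mxE; case: (i == j). Qed.

Lemma Gtheta_toeplitz2 N theta : Gtheta N theta = toeplitz2 N ((-1) ^+ theta).
Proof. by []. Qed.

Section Codeword.
Variable N : nat.
Implicit Types (b : {ffun 'I_N -> bool}) (k : nat).

Lemma bv_ord b (i : 'I_N) : bv b i = sgnb (b i).
Proof.
rewrite /bv; case: (ltnP i N) => [i_lt | ]; last by rewrite leqNgt ltn_ord.
by congr (sgnb (b _)); apply: val_inj.
Qed.

Lemma bv_out b k : (N <= k)%N -> bv b k = 0.
Proof. by move=> k_ge; rewrite /bv; case: ltnP => // k_lt; move: k_ge; rewrite leqNgt k_lt. Qed.

(* The bit b_k at a natural index (junk value [false] for k >= N). *)
Definition bit b k := bv b k == 1.

Lemma bit_ord b (i : 'I_N) : bit b i = b i.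
Proof. by rewrite /bit bv_ord; case: (b i). Qed.

Lemma bv_bit b k : (k < N)%N -> bv b k = sgnb (bit b k).
Proof. by move=> k_lt; rewrite -[k]/(val (Ordinal k_lt)) bit_ord bv_ord. Qed.

Lemma bit_ffun (g : nat -> bool) k : (k < N)%N -> bit [ffun i : 'I_N => g i] k = g k.
Proof. by move=> k_lt; rewrite -[k]/(val (Ordinal k_lt)) bit_ord ffunE. Qed.

Definition tie b k := bit b k.-1 == bit b k.

Lemma bv_mul_pred b k : (0 < k < N)%N -> bv b k.-1 * bv b k = sgnb (tie b k).
Proof.
by case/andP=> k_gt0 k_lt; rewrite !bv_bit ?sgnbM // (leq_ltn_trans (leq_pred k)).
Qed.

Lemma mell_sgnb b K : (K <= N)%N -> mell b K = \sum_(1 <= k < K) sgnb (tie b k).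
Proof.
move=> K_le; rewrite /mell big_add1; apply: eq_big_nat => k /andP [_ k_lt].
by rewrite -bv_mul_pred //=; lia.
Qed.

Lemma mell_full b : mell b N = \sum_(k < N) bv b k * bv b k.+1.
Proof.
rewrite /mell -(big_mkord xpredT (fun k => bv b k * bv b k.+1)).
have [N0 | N_gt0] := posnP N; first by rewrite !big_geq ?N0.
rewrite -[X in _ = \sum_(0 <= i < X) _](prednK N_gt0) big_nat_recr //= (prednK N_gt0).
by rewrite [bv b N]bv_out // mulr0 addr0.
Qed.

Lemma gram_Bmat b : (Bmat b)^T *m Bmat b = toeplitz2 N (mell b N).
Proof.
have sqN : \sum_(k < N) bv b k * bv b k = N%:Z.
  rewrite (eq_bigr (fun _ => 1)); last by move=> i _; rewrite bv_ord sgnbM eqxx.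
  by rewrite sumr_const card_ord natz.
apply/matrixP => i j; rewrite !mxE; under eq_bigr do rewrite !mxE.
move: i j => [[|[|//]] _] [[|[|//]] _] /=.
- by rewrite big_ord_recr /= [bv b N]bv_out // mulr0 addr0.
- by rewrite big_ord_recl /= mulr0 add0r mell_full; apply: eq_bigr => k _; rewrite mulrC.
- by rewrite big_ord_recl /= mul0r add0r mell_full.
- by rewrite big_ord_recl /= mul0r add0r.
Qed.

End Codeword.

Section Prefix.
Variables (N l : nat) (b : {ffun 'I_N -> bool}).
Hypotheses (l_gt0 : (0 < l)%N) (l_le : (l <= N)%N).
Implicit Types (c : {ffun 'I_N -> bool}) (A : {set 'I_N}) (k : nat).

Definition has_prefix c := [forall i : 'I_N, (i < l)%N ==> (c i == b i)].

Definition tail := [set i : 'I_N | (l <= i)%N].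

Definition ties c := [set i : 'I_N | (l <= i)%N && tie c i].

Lemma card_tail : #|tail| = (N - l)%N.
Proof.
rewrite -sum1_card -[RHS]muln1 -sum_nat_const_nat big_geq_mkord.
by rewrite big_mkcond [RHS]big_mkcond; apply: eq_bigr => i _; rewrite inE.
Qed.

Lemma card_ties c : #|ties c| = (\sum_(l <= k < N) tie c k)%N.
Proof.
rewrite -sum1_card big_geq_mkord big_mkcond [RHS]big_mkcond.
by apply: eq_bigr => i _; rewrite inE; case: (l <= i)%N; case: (tie c i).
Qed.

Lemma bit_prefix c k : has_prefix c -> (k < l)%N -> bit c k = bit b k.
Proof.
move=> /forallP pre k_lt; have k_ltN := leq_trans k_lt l_le.
have /implyP/(_ k_lt)/eqP := pre (Ordinal k_ltN).
by rewrite -[k]/(val (Ordinal k_ltN)) !bit_ord => ->.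
Qed.

Lemma mell_prefix c : has_prefix c -> mell c l = mell b l.
Proof.
move=> pre; rewrite !mell_sgnb //; apply: eq_big_nat => k /andP [_ k_lt].
by rewrite /tie !(bit_prefix pre) //; lia.
Qed.

Lemma mell_ties c : has_prefix c ->
  mell c N = mell b l + 2 * #|ties c|%:Z - (N - l)%:Z.
Proof.
move=> pre; rewrite mell_sgnb // (big_cat_nat (n := l)) // /= -mell_sgnb //.
by rewrite mell_prefix // sum_sgnb card_ties !natz addrA.
Qed.

Lemma ties_inj c1 c2 : has_prefix c1 -> has_prefix c2 -> ties c1 = ties c2 -> c1 = c2.
Proof.
move=> pre1 pre2 eq12; suff eq_bit k : (k < N)%N -> bit c1 k = bit c2 k.
  by apply/ffunP => i; rewrite -!bit_ord eq_bit.
elim: k => [|k IHk] k_lt; first by rewrite !bit_prefix.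
have [k_lt_l | l_le_k] := ltnP k.+1 l; first by rewrite !bit_prefix.
have /setP/(_ (Ordinal k_lt)) := eq12; rewrite !inE /= l_le_k /tie /= IHk 1?ltnW //.
by case: (bit c2 k); case: (bit c1 k.+1); case: (bit c2 k.+1).
Qed.

Fixpoint bits_of_ties (p : pred nat) k : bool :=
  if k is k'.+1 then
    if (k'.+1 < l)%N then bit b k'.+1
    else if p k'.+1 then bits_of_ties p k' else ~~ bits_of_ties p k'
  else bit b 0.

Definition of_ties A : {ffun 'I_N -> bool} :=
  [ffun i : 'I_N => bits_of_ties (fun k => k \in [seq val j | j in A]) i].

Lemma has_prefix_of_ties A : has_prefix (of_ties A).
Proof.
apply/forallP => i; apply/implyP => i_lt; rewrite ffunE -bit_ord.
by case: (val i) i_lt => [|k] //= ->.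
Qed.

Lemma ties_of_ties A : A \subset tail -> ties (of_ties A) = A.
Proof.
move=> /subsetP sA; apply/setP => i; rewrite inE.
have [i_lt | l_le_i] /= := ltnP i l.
  by apply/esym/negP => /sA; rewrite inE leqNgt i_lt.
move: l_le_i; rewrite -(mem_image val_inj).
case: i => [[|k] k_lt] /= l_le_k; first by move: l_le_k; rewrite leqNgt l_gt0.
rewrite /tie /of_ties !bit_ffun ?(ltnW k_lt) //= ltnNge l_le_k /=.
by case: (_ \in _); case: (bits_of_ties _ k).
Qed.

Lemma card_prefix_ties (P : pred {set 'I_N}) :
  #|[set c | has_prefix c && P (ties c)]| =
  #|[set A : {set 'I_N} | (A \subset tail) && P A]|.
Proof.
rewrite -(@card_in_imset _ _ ties); last first.
  by move=> c1 c2; rewrite !inE => /andP [pre1 _] /andP [pre2 _]; apply: ties_inj.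
apply: eq_card => A; rewrite [in RHS]inE; apply/imsetP/andP => [[c + ->] | [sA PA]].
  rewrite inE => /andP [_ Pc]; split=> //.
  by apply/subsetP => i; rewrite !inE => /andP [].
exists (of_ties A); last by rewrite ties_of_ties.
by rewrite inE ties_of_ties // PA andbT; apply: has_prefix_of_ties.
Qed.

Lemma card_Aset_toeplitz2 t r : 2 * r = (N - l)%:Z + t - mell b l ->
  #|Aset b l (toeplitz2 N t)| = if 0 <= r <= (N - l)%:Z then 'C(N - l, absz r) else 0%N.
Proof.
move=> Er; rewrite -card_tail -card_subsets_of_size -card_prefix_ties.
apply: eq_card => c; rewrite !inE; apply/andb_id2l => pre.
rewrite gram_Bmat (inj_eq (@toeplitz2_inj _)) mell_ties //.
apply/eqP/eqP; lia.
Qed.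

Lemma mell_parity : exists q : int, mell b l = 2 * q - (l%:Z - 1).
Proof.
exists (\sum_(1 <= k < l) tie b k)%:Z.
by rewrite mell_sgnb // sum_sgnb !natz (subzn l_gt0).
Qed.

Lemma card_Aset t : (2 %| N%:Z - 1 + t)%Z ->
  #|Aset b l (toeplitz2 N t)| =
  if `|t - mell b l| <= N%:Z - l%:Z then
    'C(N - l, (absz (N%:Z - l%:Z + t - mell b l)%R)./2)%N
  else 0%N.
Proof.
move=> /dvdzP [s Es]; have [q Eq] := mell_parity.
have Er : 2 * (s - q) = (N - l)%:Z + t - mell b l by rewrite -subzn // Eq; lia.
rewrite subzn // (card_Aset_toeplitz2 Er) -Er abszM mul2n doubleK.
congr (if _ then _ else _); rewrite ler_norml.
by apply/idP/idP => /andP [? ?]; apply/andP; split; lia.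
Qed.

End Prefix.

Theorem lemma2 (N : nat) (hN : (2 <= N)%N) :
  (odd N ->
   forall (b : {ffun 'I_N -> bool}) (l : nat), (1 <= l <= N)%N ->
     #|Aset b l (GNI N)| =
       if `|mell b l| <= N%:Z - l%:Z then
          'C(N - l, (absz (N%:Z - l%:Z - mell b l)%R)./2)%N
       else 0%N) /\
  (~~ odd N ->
   forall (theta : nat), (theta == 1)%N || (theta == 2)%N ->
   forall (b : {ffun 'I_N -> bool}) (l : nat), (1 <= l <= N)%N ->
     #|Aset b l (Gtheta N theta)| =
       if `|(-1) ^+ theta - mell b l| <= N%:Z - l%:Z then
          'C(N - l, (absz (N%:Z - l%:Z + (-1) ^+ theta - mell b l)%R)./2)%N
       else 0%N).
Proof.
have [h Nh] : exists h, N = (odd N + h * 2)%N by exists N./2; rewrite muln2 odd_double_half.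
split=> [oddN b l /andP [l_gt0 l_le] | evenN th th12 b l /andP [l_gt0 l_le]].
  rewrite GNI_toeplitz2 card_Aset // ?sub0r ?normrN ?addr0 //.
  by apply/dvdzP; exists h%:Z; rewrite Nh oddN /=; lia.
rewrite Gtheta_toeplitz2 card_Aset //; apply/dvdzP; rewrite Nh (negbTE evenN) /=.
by case/orP: th12 => /eqP ->; [exists (h%:Z - 1) | exists h%:Z]; rewrite ?expr1 ?sqrrN1; lia.
Qed.
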